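(* Let $G$ be a linear system with generalized state-space realization $\dot{x}=Ax+\hat{A}w+Bu$, $w=\bar{A}x+\tilde{A}w+\bar{B}u$, $y=Cx+\bar{C}w+Du$ (with $I-\tilde{A}$ invertible) and complete computational structure $\mathcal{C}$. Then the subsystem structure $\mathcal{S}$ of $G$ is unique; equivalently, there is a unique admissible partition of the vertex set $V(\mathcal{C})$ of maximal cardinality.
   Context: Here $u\in\mathbb{R}^m$ are inputs, $x\in\mathbb{R}^n$ states, $w\in\mathbb{R}^l$ auxiliary variables, $y\in\mathbb{R}^p$ outputs. The complete computational structure $\mathcal{C}$ is the directed graph with one vertex for each input $u_i$, each state (vertex $f_j$, producing $x_j$), each auxiliary variable (vertex $g_k$, producing $w_k$) and each output (vertex $h_r$, producing $y_r$); there is an edge from vertex $a$ to vertex $b$, labelled by the variable produced by $a$, whenever the function defining the variable associated with $b$ depends on the variable produced by $a$ (for linear equations: the corresponding coefficient is nonzero). Inputs and outputs are manifest variables; states are hidden; an auxiliary variable is hidden unless it is manifest, i.e. passed directly out as an output (e.g. $y_r=w_k$). A partition of $V(\mathcal{C})$ is admissible if every edge of $\mathcal{C}$ between distinct components of the partition represents a manifest (not hidden) variable. The subsystem structure $\mathcal{S}$ is the condensation graph of $\mathcal{C}$ whose vertices $S_1,\dots,S_q$ are the components of an admissible partition of $V(\mathcal{C})$ of maximal cardinality, with an edge $(S_i,S_j)$ whenever $\mathcal{C}$ has an edge from some vertex of $S_i$ to some vertex of $S_j$; vertices are labelled by the transfer function of the associated subsystem and edges by the associated variable. *)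

From HB Require Import structures.
From mathcomp Require Import all_boot all_order all_algebra.
Set Implicit Arguments. Unset Strict Implicit. Unset Printing Implicit Defensive.
Import GRing.Theory.
Local Open Scope ring_scope.

(* Generalized state-space realization
     xdot = A x + Ah w + B u,
     w    = Ab x + At w + Bb u,
     y    = C x + Cb w + D u
   with u in R^m, x in R^n, w in R^l, y in R^p. *)
Record gss (R : fieldType) (m n l p : nat) := Gss {
  sA  : 'M[R]_(n, n); sAh : 'M[R]_(n, l); sB  : 'M[R]_(n, m);
  sAb : 'M[R]_(l, n); sAt : 'M[R]_(l, l); sBb : 'M[R]_(l, m);
  sC  : 'M[R]_(p, n); sCb : 'M[R]_(p, l); sD  : 'M[R]_(p, m) }.

(* Vertices of the complete computational structure:
   inl (inl (inl i)) = input u_i, inl (inl (inr j)) = state vertex f_j,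
   inl (inr k) = auxiliary vertex g_k, inr r = output vertex h_r. *)
Definition vtx (m n l p : nat) : finType := ('I_m + 'I_n + 'I_l + 'I_p)%type.

Section CCS.
Variables (R : fieldType) (m n l p : nat) (S : gss R m n l p).

(* coefficient of the variable produced by [a] in the equation defining the
   variable associated with [b] *)
Definition coef (b a : vtx m n l p) : R :=
  match b with
  | inl (inl (inl _)) => 0
  | inl (inl (inr j)) =>
      match a with
      | inl (inl (inl i)) => sB S j i
      | inl (inl (inr j')) => sA S j j'
      | inl (inr k) => sAh S j k
      | inr _ => 0
      end
  | inl (inr k) =>
      match a with
      | inl (inl (inl i)) => sBb S k i
      | inl (inl (inr j)) => sAb S k j
      | inl (inr k') => sAt S k k'
      | inr _ => 0
      end
  | inr r =>
      match a with
      | inl (inl (inl i)) => sD S r i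
      | inl (inl (inr j)) => sC S r j
      | inl (inr k) => sCb S r k
      | inr _ => 0
      end
  end.

Definition ccs_edge (a b : vtx m n l p) : bool := coef b a != 0.

(* auxiliary variable w_k is manifest: some output is y_r = w_k *)
Definition aux_manifest (k : 'I_l) : bool :=
  [exists r : 'I_p, [&& row r (sC S) == 0, row r (sD S) == 0 &
                        row r (sCb S) == delta_mx 0 k]].

Definition manifest (a : vtx m n l p) : bool :=
  match a with
  | inl (inl (inl _)) => true
  | inl (inl (inr _)) => false
  | inl (inr k) => aux_manifest k
  | inr _ => true
  end.

Definition admissible (P : {set {set vtx m n l p}}) : bool :=
  partition P [set: vtx m n l p] &&
  [forall a, forall b,
     (ccs_edge a b && (pblock P a != pblock P b)) ==> manifest a].

Definition max_admissible (P : {set {set vtx m n l p}}) : Prop :=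
  admissible P /\
  forall Q : {set {set vtx m n l p}}, admissible Q -> (#|Q| <= #|P|)%N.

End CCS.

(* Only hidden variables constrain an admissible partition: an edge leaving a
   vertex with a hidden variable must stay inside one block.  The blocks of any
   admissible partition are therefore unions of the connected components of the
   undirected graph of these hidden edges, and the partition into these
   components is itself admissible.  So it refines every admissible partition,
   and a partition strictly coarser than it has strictly fewer blocks. *)
From mathcomp Require Import all_boot all_order all_algebra.
Local Open Scope ring_scope.

Set Implicit Arguments.
Unset Strict Implicit.
Unset Printing Implicit Defensive.

Section CoarserPartition.
Variable T : finType.
Implicit Types P Q : {set {set T}}.

Lemma partition_pblock_imset Q : partition Q [set: T] -> Q = pblock Q @: [set: T].
Proof.
move=> partQ; have [/eqP covQ tiQ _] := and3P partQ.
apply/setP => B; apply/idP/imsetP => [QB | [x _ ->]].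
- have /set0Pn[x Bx] := partition_neq0 partQ QB.
  by exists x; rewrite ?inE // (def_pblock tiQ QB Bx).
- by apply: pblock_mem; rewrite covQ inE.
Qed.

(* [P] refines [Q]: the map [B |-> Q-block of any point of B] sends [P] onto
   [Q], and it is injective only when the two partitions coincide. *)
Lemma card_coarser_partition P Q :
    partition P [set: T] -> partition Q [set: T] ->
    (forall x, pblock P x \subset pblock Q x) ->
  (#|Q| <= #|P| ?= iff (Q == P))%N.
Proof.
move=> partP partQ PsubQ.
have [/eqP covP tiP _] := and3P partP; have [/eqP covQ tiQ _] := and3P partQ.
have inP x : x \in pblock P x by rewrite mem_pblock covP inE.
pose g (B : {set T}) := if [pick z in B] is Some z then pblock Q z else set0.
have gE x : g (pblock P x) = pblock Q x.
  rewrite /g; case: pickP => [z zPx | /(_ x)]; last by rewrite inP.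
  exact/same_pblock/(subsetP (PsubQ x)).
have defQ : Q = g @: P.
  rewrite {1}(partition_pblock_imset partQ) (partition_pblock_imset partP).
  by rewrite -imset_comp; apply: eq_imset => x /=; rewrite gE.
split; first by rewrite defQ leq_imset_card.
apply/eqP/eqP => [eq_card | -> //]; have /imset_injP inj_g : #|g @: P| == #|P|.
  by rewrite -defQ eq_card.
rewrite (partition_pblock_imset partQ) (partition_pblock_imset partP).
apply: eq_imset => x; apply/eqP; rewrite eqEsubset PsubQ andbT.
apply/subsetP => y /(same_pblock tiQ); rewrite -!gE => /inj_g eqPyx.
by rewrite -eqPyx ?inP ?pblock_mem ?covP ?inE.
Qed.

End CoarserPartition.

Section ConnectedComponents.
Variables (T : finType) (h : rel T).

Definition compatible_partition (Q : {set {set T}}) : bool :=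
  partition Q [set: T] &&
  [forall a, forall b, h a b ==> (pblock Q a == pblock Q b)].

Definition symclosure : rel T := fun x y => h x y || h y x.

Definition components : {set {set T}} :=
  equivalence_partition (connect symclosure) [set: T].

Lemma connect_symclosure_equiv : {in [set: T] & &, equivalence_rel (connect symclosure)}.
Proof.
move=> x y z _ _ _; split=> [|xy]; first exact: connect0.
have sym_cc : connect_sym symclosure by apply: sym_connect_sym => a b; exact: orbC.
by apply/idP/idP; apply: connect_trans; rewrite // sym_cc.
Qed.

Lemma components_partition : partition components [set: T].
Proof. exact: equivalence_partitionP connect_symclosure_equiv. Qed.

Lemma mem_pblock_components x y : (y \in pblock components x) = connect symclosure x y.
Proof. by rewrite (pblock_equivalence_partition connect_symclosure_equiv) ?inE. Qed.

Lemma compatible_components : compatible_partition components.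
Proof.
rewrite /compatible_partition components_partition.
apply/forallP => a; apply/forallP => b; apply/implyP => hab.
rewrite (eq_pblock _ (partition_trivIset components_partition)); last first.
  by rewrite (cover_partition components_partition) inE.
by rewrite mem_pblock_components connect1 // /symclosure hab.
Qed.

Lemma compatible_pblock_connect Q x y :
  compatible_partition Q -> connect symclosure x y -> pblock Q x = pblock Q y.
Proof.
move=> /andP[_ /forallP compQ] /connectP[s]; elim: s x => [|z s IHs] x /=.
  by move=> _ ->.
have compQab a b : h a b -> pblock Q a = pblock Q b.
  by move=> hab; apply/eqP; apply: (implyP (forallP (compQ a) b)).
case/andP=> /orP hxz path_zs last_zs; rewrite -(IHs z path_zs last_zs).
by case: hxz => [/compQab | /compQab ->].
Qed.

Lemma card_compatible_partition Q :
  compatible_partition Q -> (#|Q| <= #|components| ?= iff (Q == components))%N.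
Proof.
move=> compQ; have [partQ _] := andP compQ.
apply: (card_coarser_partition components_partition partQ) => x.
apply/subsetP => y; rewrite mem_pblock_components.
move/(compatible_pblock_connect compQ) ->.
by rewrite mem_pblock (cover_partition partQ) inE.
Qed.

End ConnectedComponents.

Definition hidden_edge (R : fieldType) (m n l p : nat) (S : gss R m n l p) :
  rel (vtx m n l p) := fun a b => ccs_edge S a b && ~~ manifest S a.

Lemma admissibleE (R : fieldType) (m n l p : nat) (S : gss R m n l p) Q :
  admissible S Q = compatible_partition (hidden_edge S) Q.
Proof.
congr (_ && _); apply: eq_forallb => a; apply: eq_forallb => b.
by rewrite /hidden_edge; case: ccs_edge; case: manifest; case: eqP.
Qed.

Theorem lemma2 (R : fieldType) (m n l p : nat) (S : gss R m n l p) :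
  (1%:M - sAt S) \in unitmx ->
  exists P : {set {set vtx m n l p}},
    max_admissible S P /\
    forall Q : {set {set vtx m n l p}}, max_admissible S Q -> Q = P.
Proof.
move=> _; have adm_comp : admissible S (components (hidden_edge S)).
  by rewrite admissibleE compatible_components.
exists (components (hidden_edge S)); split.
  by split=> // Q; rewrite admissibleE => /card_compatible_partition[].
move=> Q []; rewrite admissibleE => /card_compatible_partition cardQ maxQ.
by apply/eqP; rewrite -cardQ eqn_leq cardQ maxQ.
Qed.
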